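(* In the MemSinks setting described in the context, suppose the model is trained from zero initialization for $N$ total steps, during which the repeated example $(\mathbf{s}^{\mathrm{mem}},\mathbf{e}^{\mathrm{mem}})$ is observed $k$ times and non-repeated examples are observed $N-k$ times, and suppose the memorization activations of $\mathbf{s}^{\mathrm{mem}}$ overlap (have nonzero inner product) with those of at most $p(N-k)$ of the non-repeated steps. Then at the end of training: (1) $(\mathbf{e}^{\mathrm{mem}})^\top f^{(N)}_{\mathrm{shared\text{-}only}}(\mathbf{s}^{\mathrm{mem}})\le \gamma k(1-c_{\min})-\gamma(N-k)\,\epsilon_{\mathrm{shared}}\,c_{\min}$; (2) $(\mathbf{e}^{\mathrm{mem}})^\top f^{(N)}_{\mathrm{mem\text{-}only}}(\mathbf{s}^{\mathrm{mem}})\ge \gamma k(1-c_{\max})-\gamma(N-k)\,p\,\epsilon_{\mathrm{mem}}\,c_{\max}$.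
   Context: Model: $f(\mathbf{z})=\mathbf{W}_{\mathrm{proj}}\mathbf{z}\in\mathbb{R}^V$ with fixed hidden activations $\mathbf{z}(\mathbf{s})=[\mathbf{z}(\mathbf{s})_{\mathrm{shared}};\mathbf{z}(\mathbf{s})_{\mathrm{mem}}]$ split into shared (generalization) neurons and memorization-sink neurons, and $\mathbf{W}_{\mathrm{proj}}=[\mathbf{W}^{\mathrm{shared}}_{\mathrm{proj}}\ \mathbf{W}^{\mathrm{mem}}_{\mathrm{proj}}]$ correspondingly. In MemSinks, each sequence activates a sequence-specific (deterministic, consistent across repetitions) subset of memorization neurons and the rest are masked to zero; $\mathbf{z}(\mathbf{s})_{\mathrm{mem}}$ denotes the masked memorization activation. $f_{\mathrm{shared\text{-}only}}(\mathbf{s})=\mathbf{W}^{\mathrm{shared}}_{\mathrm{proj}}\mathbf{z}(\mathbf{s})_{\mathrm{shared}}$ (memorization neurons dropped out) and $f_{\mathrm{mem\text{-}only}}(\mathbf{s})=\mathbf{W}^{\mathrm{mem}}_{\mathrm{proj}}\mathbf{z}(\mathbf{s})_{\mathrm{mem}}$ (shared neurons dropped out); $f^{(N)}$ denotes parameters after $N$ steps. Training: batch size 1, cross-entropy loss with softmax $\sigma$ applied to the full forward pass $f(\mathbf{z})$, learning rate $\gamma>0$; an update on $(\mathbf{z},\mathbf{e})$ is $\mathbf{W}^{\mathrm{shared}}_{\mathrm{proj}}\leftarrow\mathbf{W}^{\mathrm{shared}}_{\mathrm{proj}}+\gamma(\mathbf{e}-\sigma(f(\mathbf{z})))\mathbf{z}_{\mathrm{shared}}^\top$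 and $\mathbf{W}^{\mathrm{mem}}_{\mathrm{proj}}\leftarrow\mathbf{W}^{\mathrm{mem}}_{\mathrm{proj}}+\gamma(\mathbf{e}-\sigma(f(\mathbf{z})))\mathbf{z}_{\mathrm{mem}}^\top$. Targets are one-hot vectors in $\mathbb{R}^V$, and every non-repeated example has target different from $\mathbf{e}^{\mathrm{mem}}$. Assumptions: $\|\mathbf{z}(\mathbf{s}^{\mathrm{mem}})_{\mathrm{shared}}\|_2=\|\mathbf{z}(\mathbf{s}^{\mathrm{mem}})_{\mathrm{mem}}\|_2=1$; throughout training the logits of every forward pass used in an update satisfy $\|f(\mathbf{z})\|_\infty\le C_{\mathrm{proj}}/2$; for every non-repeated example $\mathbf{s}^{(j)}$, $\mathbf{z}(\mathbf{s}^{\mathrm{mem}})_{\mathrm{shared}}^\top\mathbf{z}(\mathbf{s}^{(j)})_{\mathrm{shared}}\ge\epsilon_{\mathrm{shared}}\ge0$ and $0\le\mathbf{z}(\mathbf{s}^{\mathrm{mem}})_{\mathrm{mem}}^\top\mathbf{z}(\mathbf{s}^{(j)})_{\mathrm{mem}}\le\epsilon_{\mathrm{mem}}$. Constants: $c_{\min}=\exp(-C_{\mathrm{proj}})/V$ and $c_{\max}=\exp(C_{\mathrm{proj}})/(V-1)$, with $V\ge2$. *)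

From HB Require Import structures.
From mathcomp Require Import all_boot all_order all_algebra.
From mathcomp Require Import reals.
From mathcomp Require Import sequences exp.
Import Order.TTheory GRing.Theory Num.Theory.
Local Open Scope ring_scope.

Definition onehot {R : realType} {V : nat} (i : 'I_V) : 'cV[R]_V := delta_mx i 0.

Definition dotv {R : realType} {n : nat} (u v : 'cV[R]_n) : R := (u^T *m v) 0 0.

Definition softmax {R : realType} {V : nat} (v : 'cV[R]_V) : 'cV[R]_V :=
  \col_i (expR (v i 0) / \sum_j expR (v j 0)).

Definition fwd {R : realType} {V ds dm : nat}
  (W : 'M[R]_(V, ds) * 'M[R]_(V, dm)) (zs : 'cV[R]_ds) (zm : 'cV[R]_dm) : 'cV[R]_V :=
  W.1 *m zs + W.2 *m zm.

(* Parameters (W_shared, W_mem) after n SGD steps (batch size 1, cross-entropy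
   with softmax on the full forward pass, learning rate gamma), from zero
   initialization; the example at step t (0-based) has shared activation zs t,
   (masked) memorization activation zm t and target onehot (tgt t). *)
Fixpoint params {R : realType} {V ds dm : nat} (gamma : R)
  (zs : nat -> 'cV[R]_ds) (zm : nat -> 'cV[R]_dm) (tgt : nat -> 'I_V) (n : nat)
  : 'M[R]_(V, ds) * 'M[R]_(V, dm) :=
  match n with
  | 0%N => (0, 0)
  | n'.+1 =>
      let W := params gamma zs zm tgt n' in
      let g := onehot (tgt n') - softmax (fwd W (zs n') (zm n')) in
      (W.1 + gamma *: (g *m (zs n')^T), W.2 + gamma *: (g *m (zm n')^T))
  end.

Definition c_min {R : realType} (V : nat) (C : R) : R := expR (- C) / V%:R.
Definition c_max {R : realType} (V : nat) (C : R) : R := expR C / (V.-1)%:R.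

From HB Require Import structures.
From mathcomp Require Import all_boot all_order all_algebra.
From mathcomp Require Import reals.
From mathcomp Require Import sequences exp.
From mathcomp Require Import lra.
Import Order.TTheory GRing.Theory Num.Theory.
Local Open Scope ring_scope.

(* Each SGD step is a rank-one update, so it moves the logit of e_mem on s_mem
   (through either block of W) by gamma * (e_t - sigma)_(e_mem) * <z_t, z_mem>,
   where z is the activation of that block.  Bounded logits pin
   sigma_(e_mem) between c_min and c_max.  A repeated step has target e_mem and
   overlap 1, contributing gamma (1 - sigma) in [gamma (1 - c_max), gamma (1 - c_min)];
   a fresh step has a different target and contributes - gamma sigma <z_t, z_mem>,
   which is at most - gamma c_min eps_shared through the shared block, and at least
   - gamma c_max eps_mem through the memorization block (and exactly 0 when the
   memorization activations do not overlap). *)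

Lemma onehotT_mulmx (R : realType) V (e : 'I_V) (v : 'cV[R]_V) :
  ((onehot e)^T *m v) 0 0 = v e 0.
Proof.
rewrite mxE (bigD1 e) //= big1 ?addr0; first by rewrite !mxE !eqxx mul1r.
by move=> i /negbTE ne; rewrite !mxE ne mul0r.
Qed.

Lemma onehotE (R : realType) V (i e : 'I_V) :
  (onehot i : 'cV[R]_V) e 0 = (i == e)%:R.
Proof. by rewrite mxE eqxx andbT eq_sym. Qed.

Lemma dotvC (R : realType) n (u v : 'cV[R]_n) : dotv u v = dotv v u.
Proof. by rewrite /dotv -[u^T *m v]trmxK trmx_mul trmxK mxE. Qed.

Lemma mulmx_rank1_updateE (R : realType) V d (gamma : R) (W : 'M[R]_(V, d))
    (g : 'cV[R]_V) (z u : 'cV[R]_d) (e : 'I_V) :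
  ((W + gamma *: (g *m z^T)) *m u) e 0 = (W *m u) e 0 + gamma * g e 0 * dotv z u.
Proof.
rewrite mulmxDl mxE; congr (_ + _).
by rewrite -scalemxAl mxE -mulmxA mxE big_ord1 mulrA.
Qed.

Section SoftmaxBounds.
Context {R : realType} {V : nat} {C : R} {v : 'cV[R]_V}.
Hypothesis V_gt1 : (1 < V)%N.
Hypothesis logit_bound : forall i, `|v i 0| <= C / 2.

Let S := \sum_j expR (v j 0).

Lemma expR_logit_bounds i : expR (- (C / 2)) <= expR (v i 0) <= expR (C / 2).
Proof. by rewrite !ler_expR -ler_norml. Qed.

Lemma sum_expR_le : S <= V%:R * expR (C / 2).
Proof.
apply: le_trans (_ : _ <= \sum_(j < V) expR (C / 2)) _.
  by apply: ler_sum => i _; case/andP: (expR_logit_bounds i).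
by rewrite sumr_const card_ord mulr_natl.
Qed.

Lemma sum_expR_ge (e : 'I_V) : (V.-1)%:R * expR (- (C / 2)) <= S.
Proof.
apply: le_trans (_ : _ <= \sum_(j | j != e) expR (v j 0)) _.
  apply: le_trans (_ : _ <= \sum_(j | j != e) expR (- (C / 2))) _.
    by rewrite sumr_const cardC1 card_ord mulr_natl.
  by apply: ler_sum => i _; case/andP: (expR_logit_bounds i).
by rewrite /S [X in _ <= X](bigD1 e) //= lerDr ltW ?expR_gt0.
Qed.

Lemma sum_expR_gt0 : 0 < S.
Proof.
have [e _] : exists e : 'I_V, true by exists (Ordinal (ltnW V_gt1)).
rewrite /S (bigD1 e) //= ltr_pwDl ?expR_gt0 // sumr_ge0 // => i _.
exact/ltW/expR_gt0.
Qed.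

Lemma softmax_ge_c_min e : c_min V C <= softmax v e 0.
Proof.
have V_gt0 : (0 : R) < V%:R by rewrite ltr0n ltnW.
rewrite /softmax mxE -/S /c_min ler_pdivlMr ?sum_expR_gt0 //.
apply: le_trans (_ : _ <= expR (- C) / V%:R * (V%:R * expR (C / 2))) _.
  by rewrite ler_wpM2l ?sum_expR_le // divr_ge0 ?ltW ?expR_gt0.
have -> : expR (- C) / V%:R * (V%:R * expR (C / 2)) = expR (- (C / 2)).
  by rewrite mulrA divfK ?gt_eqF // -expRD; congr expR; lra.
by case/andP: (expR_logit_bounds e).
Qed.

Lemma softmax_le_c_max e : softmax v e 0 <= c_max V C.
Proof.
have V1_gt0 : (0 : R) < (V.-1)%:R by rewrite ltr0n -ltnS prednK // ltnW.
rewrite /softmax mxE -/S /c_max ler_pdivrMr ?sum_expR_gt0 //.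
apply: le_trans (_ : _ <= expR C / (V.-1)%:R * ((V.-1)%:R * expR (- (C / 2)))) _.
  have -> : expR C / (V.-1)%:R * ((V.-1)%:R * expR (- (C / 2))) = expR (C / 2).
    by rewrite mulrA divfK ?gt_eqF // -expRD; congr expR; lra.
  by case/andP: (expR_logit_bounds e).
by rewrite ler_wpM2l ?(sum_expR_ge e) // divr_ge0 ?ltW ?expR_gt0.
Qed.
End SoftmaxBounds.

Lemma c_min_ge0 (R : realType) V (C : R) : 0 <= c_min V C.
Proof. by rewrite /c_min divr_ge0 // ltW ?expR_gt0. Qed.

Lemma c_max_ge0 (R : realType) V (C : R) : 0 <= c_max V C.
Proof. by rewrite /c_max divr_ge0 // ltW ?expR_gt0. Qed.

Lemma sumr_indicator (R : ringType) (T : Type) (P : pred T) (s : seq T) (x : R) :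
  \sum_(t <- s) (P t)%:R * x = (count P s)%:R * x.
Proof.
elim: s => [|t s IH]; first by rewrite big_nil mul0r.
by rewrite big_cons IH /= natrD mulrDl.
Qed.

Lemma ler_sum_telescope {R : numDomainType} (a : nat -> R) {b : nat -> R} {N : nat} :
  (forall n, (n < N)%N -> a n.+1 - a n <= b n) -> a N - a 0 <= \sum_(0 <= n < N) b n.
Proof.
move=> ab; rewrite -telescope_sumr //.
by apply: ler_sum_nat => n /andP[_]; exact: ab.
Qed.

Lemma ger_sum_telescope {R : numDomainType} (a : nat -> R) {b : nat -> R} {N : nat} :
  (forall n, (n < N)%N -> b n <= a n.+1 - a n) -> \sum_(0 <= n < N) b n <= a N - a 0.
Proof.
move=> ba; rewrite -telescope_sumr //.
by apply: ler_sum_nat => n /andP[_]; exact: ba.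
Qed.

Section MemSinksTraining.
Context {R : realType} {V ds dm : nat} {gamma C eps_sh eps_mem : R} {N : nat}.
Context {zs : nat -> 'cV[R]_ds} {zm : nat -> 'cV[R]_dm} {tgt : nat -> 'I_V}.
Context {rep : nat -> bool} {zs_mem : 'cV[R]_ds} {zm_mem : 'cV[R]_dm} {e_mem : 'I_V}.

Local Notation W := (params gamma zs zm tgt).
Local Notation sigma n := (softmax (fwd (W n) (zs n) (zm n)) e_mem 0).
Local Notation shared_logit n := (((W n).1 *m zs_mem) e_mem 0).
Local Notation mem_logit n := (((W n).2 *m zm_mem) e_mem 0).
Local Notation overlaps := (fun t => ~~ rep t && (dotv zm_mem (zm t) != 0%R)).

Lemma shared_logitS n :
  shared_logit n.+1 =
  shared_logit n + gamma * ((tgt n == e_mem)%:R - sigma n) * dotv (zs n) zs_mem.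
Proof.
by rewrite /= mulmx_rank1_updateE; congr (_ + _ * _ * _); rewrite -onehotE !mxE.
Qed.

Lemma mem_logitS n :
  mem_logit n.+1 =
  mem_logit n + gamma * ((tgt n == e_mem)%:R - sigma n) * dotv (zm n) zm_mem.
Proof.
by rewrite /= mulmx_rank1_updateE; congr (_ + _ * _ * _); rewrite -onehotE !mxE.
Qed.

Hypothesis V_gt1 : (1 < V)%N.
Hypothesis gamma_gt0 : 0 < gamma.
Hypothesis eps_sh_ge0 : 0 <= eps_sh.
Hypothesis zs_mem_unit : dotv zs_mem zs_mem = 1.
Hypothesis zm_mem_unit : dotv zm_mem zm_mem = 1.
Hypothesis repeated_step : forall t, (t < N)%N -> rep t ->
  [/\ zs t = zs_mem, zm t = zm_mem & tgt t = e_mem].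
Hypothesis fresh_step : forall t, (t < N)%N -> ~~ rep t ->
  [/\ tgt t != e_mem, eps_sh <= dotv zs_mem (zs t) &
      0 <= dotv zm_mem (zm t) <= eps_mem].
Hypothesis logits_bounded : forall t, (t < N)%N -> forall i : 'I_V,
  `|fwd (W t) (zs t) (zm t) i 0| <= C / 2.

Lemma shared_logit_incr_le n : (n < N)%N ->
  shared_logit n.+1 - shared_logit n <=
  (rep n)%:R * (gamma * (1 - c_min V C)) + (~~ rep n)%:R * - (gamma * eps_sh * c_min V C).
Proof.
move=> nN; rewrite shared_logitS addrAC subrr add0r.
have sigma_ge := softmax_ge_c_min V_gt1 (logits_bounded n nN) e_mem.
have cmin_ge0 := c_min_ge0 _ V C.
set s := sigma n in sigma_ge *.
case: (boolP (rep n)) => [rn | nrn] /=.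
  have [-> _ ->] := repeated_step n nN rn.
  rewrite eqxx zs_mem_unit /= mulr1 mul1r mul0r addr0.
  by rewrite ler_pM2l // lerD2l lerN2.
have [/negbTE -> overlap_ge _] := fresh_step n nN nrn.
rewrite mul0r add0r mul1r sub0r dotvC.
rewrite mulrN mulNr lerN2 -!mulrA ler_pM2l // [eps_sh * _]mulrC.
exact: ler_pM cmin_ge0 eps_sh_ge0 sigma_ge overlap_ge.
Qed.

Lemma mem_logit_incr_ge n : (n < N)%N ->
  (rep n)%:R * (gamma * (1 - c_max V C)) +
  (overlaps n)%:R * - (gamma * eps_mem * c_max V C)
  <= mem_logit n.+1 - mem_logit n.
Proof.
move=> nN; rewrite mem_logitS addrAC subrr add0r.
have sigma_le := softmax_le_c_max V_gt1 (logits_bounded n nN) e_mem.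
have sigma_ge0 := le_trans (c_min_ge0 _ V C) (softmax_ge_c_min V_gt1 (logits_bounded n nN) e_mem).
set s := sigma n in sigma_le sigma_ge0 *.
case: (boolP (rep n)) => [rn | nrn] /=.
  have [_ -> ->] := repeated_step n nN rn.
  rewrite eqxx zm_mem_unit /= mulr1 mul1r mul0r addr0.
  by rewrite ler_pM2l // lerD2l lerN2.
have [/negbTE -> _ /andP[overlap_ge0 overlap_le]] := fresh_step n nN nrn.
rewrite mul0r add0r sub0r [dotv (zm n) _]dotvC.
have [-> | _] /= := eqVneq (dotv zm_mem (zm n)) 0; first by rewrite !mul0r mulr0.
rewrite mul1r mulrN mulNr lerN2 -!mulrA ler_pM2l // [eps_mem * _]mulrC.
exact: ler_pM sigma_ge0 overlap_ge0 sigma_le overlap_le.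
Qed.

Lemma shared_logit_le :
  shared_logit N <= gamma * (count rep (iota 0 N))%:R * (1 - c_min V C)
                    - gamma * (count (predC rep) (iota 0 N))%:R * eps_sh * c_min V C.
Proof.
have := ler_sum_telescope (fun n => shared_logit n) shared_logit_incr_le.
rewrite [(W 0).1]/= mul0mx [X in _ - X]mxE subr0 big_split /= !sumr_indicator /index_iota subn0.
by move/le_trans; apply; lra.
Qed.

Lemma mem_logit_ge :
  gamma * (count rep (iota 0 N))%:R * (1 - c_max V C)
  - gamma * (count overlaps (iota 0 N))%:R * eps_mem * c_max V C
  <= mem_logit N.
Proof.
have := ger_sum_telescope (fun n => mem_logit n) mem_logit_incr_ge.
rewrite [(W 0).2]/= mul0mx [X in _ <= _ - X]mxE subr0 big_split /= !sumr_indicator /index_iota subn0.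
by apply: le_trans; lra.
Qed.

Lemma eps_mem_ge0 : (0 < count (predC rep) (iota 0 N))%N -> 0 <= eps_mem.
Proof.
rewrite -has_count => /hasP[t]; rewrite mem_iota => /andP[_ tN] nrt.
by have [_ _ /andP[/le_trans]] := fresh_step t tN nrt; apply.
Qed.

(* When every step is repeated, eps_mem is unconstrained and may be negative;
   then there is no overlap to pay for. *)
Lemma mem_logit_ge_budget (p : R) :
  (count overlaps (iota 0 N))%:R <= p * (count (predC rep) (iota 0 N))%:R ->
  gamma * (count rep (iota 0 N))%:R * (1 - c_max V C)
  - gamma * (count (predC rep) (iota 0 N))%:R * p * eps_mem * c_max V C
  <= mem_logit N.
Proof.
move=> overlap_budget; apply: le_trans mem_logit_ge; rewrite lerD2l lerN2.
have [no_fresh | fresh] := posnP (count (predC rep) (iota 0 N)).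
  have : (count overlaps (iota 0 N) <= count (predC rep) (iota 0 N))%N.
    by apply: sub_count => t /andP[].
  by rewrite no_fresh leqn0 => /eqP ->; rewrite !mulr0 !mul0r.
apply: ler_wpM2r (c_max_ge0 _ V C) _ _ _; apply: ler_wpM2r (eps_mem_ge0 fresh) _ _ _.
by rewrite -mulrA ler_pM2l // mulrC; exact: overlap_budget.
Qed.

End MemSinksTraining.

Theorem theoremG3 (R : realType) (V ds dm : nat) (gamma C eps_sh eps_mem p : R)
  (N k : nat)
  (zs : nat -> 'cV[R]_ds) (zm : nat -> 'cV[R]_dm) (tgt : nat -> 'I_V)
  (rep : nat -> bool)
  (zs_mem : 'cV[R]_ds) (zm_mem : 'cV[R]_dm) (e_mem : 'I_V) :
  (1 < V)%N ->
  0 < gamma ->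
  0 <= eps_sh ->
  dotv zs_mem zs_mem = 1 ->
  dotv zm_mem zm_mem = 1 ->
  count rep (iota 0 N) = k ->
  (forall t, (t < N)%N -> rep t ->
     [/\ zs t = zs_mem, zm t = zm_mem & tgt t = e_mem]) ->
  (forall t, (t < N)%N -> ~~ rep t ->
     [/\ tgt t != e_mem,
         eps_sh <= dotv zs_mem (zs t) &
         0 <= dotv zm_mem (zm t) <= eps_mem]) ->
  (count (fun t => ~~ rep t && (dotv zm_mem (zm t) != 0)) (iota 0 N))%:R
     <= p * (N - k)%:R ->
  (forall t, (t < N)%N -> forall i : 'I_V,
     `|fwd (params gamma zs zm tgt t) (zs t) (zm t) i 0| <= C / 2) ->
  let W := params gamma zs zm tgt N in
  ((onehot e_mem)^T *m (W.1 *m zs_mem)) 0 0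
     <= gamma * k%:R * (1 - c_min V C) - gamma * (N - k)%:R * eps_sh * c_min V C /\
  gamma * k%:R * (1 - c_max V C) - gamma * (N - k)%:R * p * eps_mem * c_max V C
     <= ((onehot e_mem)^T *m (W.2 *m zm_mem)) 0 0.
Proof.
move=> V_gt1 gamma_gt0 eps_sh_ge0 zs_mem_unit zm_mem_unit repeated_count
  repeated_step fresh_step overlap_count logits_bounded W.
have fresh_count : count (predC rep) (iota 0 N) = (N - k)%N.
  by rewrite -repeated_count -[X in (X - _)%N](size_iota 0 N) -(count_predC rep) addKn.
rewrite !onehotT_mulmx -fresh_count -repeated_count; split.
  exact: shared_logit_le V_gt1 gamma_gt0 eps_sh_ge0 zs_mem_unit
    repeated_step fresh_step logits_bounded.
apply: mem_logit_ge_budget V_gt1 gamma_gt0 zm_mem_unit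
  repeated_step fresh_step logits_bounded _ _.
by rewrite fresh_count.
Qed.
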